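(* Let $(X,d)$ be a compact metric space and $f\colon X\to X$ an equicontinuous map. The following are equivalent: (1) $f$ has the limit shadowing property; (2) $f$ has the shadowing property; (3) $\dim\Omega(f)=0$, equivalently $\Omega(f)$ is totally disconnected.
   Context: $f$ is equicontinuous if for every $\epsilon>0$ there is $\delta>0$ such that $d(x,y)\le\delta$ implies $\sup_{n\ge0}d(f^n(x),f^n(y))\le\epsilon$. A $\delta$-pseudo orbit is a sequence $(x_i)_{i\ge0}$ with $d(f(x_i),x_{i+1})\le\delta$ for all $i$; it is $\epsilon$-shadowed by $x$ if $d(x_i,f^i(x))\le\epsilon$ for all $i$. $f$ has the shadowing property if for every $\epsilon>0$ there is $\delta>0$ such that every $\delta$-pseudo orbit is $\epsilon$-shadowed by some point. $f$ has the limit shadowing property if for every sequence $(x_i)_{i\ge0}$ with $\lim_{i}d(f(x_i),x_{i+1})=0$ there is $y\in X$ with $\lim_i d(x_i,f^i(y))=0$. $\Omega(f)$ is the set of non-wandering points: $x$ such that for every neighborhood $U$ of $x$ there is $n>0$ with $f^n(U)\cap U\ne\emptyset$. *)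

From Stdlib Require Import Reals List.
Open Scope R_scope.

Section Metric.
Context {X : Type} (d : X -> X -> R).

Definition is_metric : Prop :=
  (forall x y, 0 <= d x y) /\
  (forall x y, d x y = 0 <-> x = y) /\
  (forall x y, d x y = d y x) /\
  (forall x y z, d x z <= d x y + d y z).

Definition is_open (U : X -> Prop) : Prop :=
  forall x, U x -> exists eps, 0 < eps /\ forall y, d x y < eps -> U y.

Definition compact_space : Prop :=
  forall (I : Type) (U : I -> X -> Prop),
    (forall i, is_open (U i)) ->
    (forall x, exists i, U i x) ->
    exists l : list I, forall x, exists i, In i l /\ U i x.

Definition equicontinuous (f : X -> X) : Prop :=
  forall eps, 0 < eps -> exists delta, 0 < delta /\
    forall x y, d x y <= delta -> forall n : nat,
      d (Nat.iter n f x) (Nat.iter n f y) <= eps.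

Definition pseudo_orbit (f : X -> X) (delta : R) (xs : nat -> X) : Prop :=
  forall i, d (f (xs i)) (xs (S i)) <= delta.

Definition eps_shadowed (f : X -> X) (eps : R) (xs : nat -> X) (x : X) : Prop :=
  forall i, d (xs i) (Nat.iter i f x) <= eps.

Definition shadowing (f : X -> X) : Prop :=
  forall eps, 0 < eps -> exists delta, 0 < delta /\
    forall xs, pseudo_orbit f delta xs -> exists x, eps_shadowed f eps xs x.

Definition limit_shadowing (f : X -> X) : Prop :=
  forall xs : nat -> X,
    Un_cv (fun i => d (f (xs i)) (xs (S i))) 0 ->
    exists y, Un_cv (fun i => d (xs i) (Nat.iter i f y)) 0.

(** non-wandering points: every neighbourhood U of x (equivalently, every open
    ball around x) satisfies f^n(U) ∩ U ≠ ∅ for some n > 0 *)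
Definition nonwandering (f : X -> X) (x : X) : Prop :=
  forall eps, 0 < eps -> exists n y, (0 < n)%nat /\
    d x y < eps /\ d x (Nat.iter n f y) < eps.

Definition rel_open (A W : X -> Prop) : Prop :=
  forall y, A y -> W y -> exists delta, 0 < delta /\
    forall z, A z -> d y z < delta -> W z.

Definition rel_clopen (A W : X -> Prop) : Prop :=
  (forall y, W y -> A y) /\ rel_open A W /\ rel_open A (fun z => ~ W z).

(** small inductive dimension of the subspace A is <= 0: A has a base of
    relatively clopen sets *)
Definition dim_zero (A : X -> Prop) : Prop :=
  forall x, A x -> forall eps, 0 < eps ->
    exists W, rel_clopen A W /\ W x /\ forall z, W z -> d x z < eps.

Definition connected_set (C : X -> Prop) : Prop :=
  forall P Q : X -> Prop, rel_open C P -> rel_open C Q ->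
    (forall x, C x -> P x \/ Q x) ->
    (forall x, C x -> P x -> Q x -> False) ->
    (forall x, C x -> P x) \/ (forall x, C x -> Q x).

Definition totally_disconnected (A : X -> Prop) : Prop :=
  forall C : X -> Prop, (forall x, C x -> A x) -> connected_set C ->
    forall x y, C x -> C y -> x = y.

End Metric.

From Stdlib Require Import Reals List Lra Lia Classical IndefiniteDescription RelationClasses.
Open Scope R_scope.

(* For an equicontinuous map of a compact space, every non-wandering point is recurrent,
   any two of them return close to themselves simultaneously, f maps Omega(f) onto itself
   and all orbits are attracted uniformly to Omega(f).

   If Omega(f) contained a connected set through x <> y, fine chains c from x to y inside
   it would lift to the pseudo-orbits i |-> f^i (c i); a (limit) shadowing orbit would
   then pass close to the orbits of both x and y, which simultaneous recurrence forbids.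
   Conversely, if Omega(f) is zero-dimensional, a finite partition of it into small
   clopen sets, refined along the orbits, gives an f-invariant equivalence with small
   classes; a pseudo-orbit soon stays near Omega(f) and only jumps between related
   points, so it is tracked by the orbit of a point of Omega(f), and by equicontinuity by
   the orbit of its own initial point. Zero-dimensionality and total disconnectedness
   agree on the compact set Omega(f) because quasi-components of compact sets are
   connected. *)

Lemma archimed_inv_S e : 0 < e -> exists N : nat, / INR (S N) < e.
Proof.
  intros He. destruct (archimed_cor1 e He) as [N [HN HN0]].
  exists (pred N). now rewrite Nat.succ_pred_pos.
Qed.

Lemma inv_INR_S_pos n : 0 < / INR (S n).
Proof. apply Rinv_0_lt_compat, lt_0_INR. lia. Qed.

Lemma inv_INR_S_le n m : (n <= m)%nat -> / INR (S m) <= / INR (S n).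
Proof. intros H. apply Rinv_le_contravar; [apply lt_0_INR | apply le_INR]; lia. Qed.

Lemma Un_cv_0_nonneg (u : nat -> R) : (forall n, 0 <= u n) ->
  Un_cv u 0 <-> forall e, 0 < e -> exists N, forall n, (N <= n)%nat -> u n < e.
Proof.
  intros Hu. unfold Un_cv, R_dist.
  split; intros H e He; destruct (H e He) as [N HN]; exists N; intros n Hn;
    specialize (HN n Hn); rewrite Rminus_0_r, Rabs_right in *; auto; apply Rle_ge, Hu.
Qed.

Lemma list_common_radius {A : Type} (Q : A -> R -> Prop) (l : list A) :
  (forall a e e', Q a e -> 0 < e' -> e' <= e -> Q a e') ->
  (forall a, In a l -> exists e, 0 < e /\ Q a e) ->
  exists e, 0 < e /\ forall a, In a l -> Q a e.
Proof.
  intros Hmono. induction l as [|a l IH]; intros H.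
  - exists 1. split; [lra | intros a []].
  - destruct IH as [e1 [He1 H1]]; [intros b Hb; apply H; now right|].
    destruct (H a (or_introl eq_refl)) as [e2 [He2 H2]].
    assert (Hm : 0 < Rmin e1 e2) by (apply Rmin_pos; lra).
    exists (Rmin e1 e2). split; [exact Hm|].
    intros b [<-|Hb].
    + apply (Hmono _ e2); [exact H2 | exact Hm | apply Rmin_r].
    + apply (Hmono _ e1); [now apply H1 | exact Hm | apply Rmin_l].
Qed.

Lemma list_nat_bound {A : Type} (g : A -> nat) (l : list A) :
  exists M, forall a, In a l -> (g a <= M)%nat.
Proof.
  induction l as [|a l [M HM]].
  - exists 0%nat. intros a [].
  - exists (Nat.max (g a) M). intros b [<-|Hb]; [lia | specialize (HM b Hb); lia].
Qed.

Lemma small_values_unbounded (g : nat -> R) :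
  (forall n, 0 <= g n) ->
  (forall e, 0 < e -> exists n, (0 < n)%nat /\ g n < e) ->
  (forall n k, g n = 0 -> g (k * n)%nat = 0) ->
  forall e, 0 < e -> forall N, exists n, (N <= n)%nat /\ (0 < n)%nat /\ g n < e.
Proof.
  intros Hpos Hsmall Hmul e He N.
  destruct (classic (exists n, (0 < n)%nat /\ g n = 0)) as [[n [Hn Hz]]|Hnz].
  - exists (S N * n)%nat. rewrite (Hmul n (S N) Hz). repeat split; [nia | nia | lra].
  - destruct (list_common_radius (fun n r => r <= g n) (seq 1 N)) as [m [Hm Hlow]].
    + intros n r r' H _ Hle. lra.
    + intros n Hn. apply in_seq in Hn. exists (g n). split; [|lra].
      destruct (Rle_lt_or_eq_dec 0 (g n) (Hpos n)) as [Hlt|Heq]; [exact Hlt|].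
      exfalso. apply Hnz. exists n. split; [lia | auto].
    + destruct (Hsmall (Rmin e m)) as [n [Hn Hgn]]; [now apply Rmin_pos|].
      exists n. split; [|split; [exact Hn | pose proof (Rmin_l e m); lra]].
      destruct (Nat.le_gt_cases N n) as [HNn|HnN]; [exact HNn|].
      pose proof (Hlow n ltac:(apply in_seq; lia)). pose proof (Rmin_r e m). lra.
Qed.

(* Position (block, offset) of index [i] in the concatenation of blocks of lengths
   [len 0], [len 1], ... *)
Fixpoint block_pos (len : nat -> nat) (i : nat) : nat * nat :=
  match i with
  | O => (O, O)
  | S i' => let (k, j) := block_pos len i' in
            if Nat.ltb (S j) (len k) then (k, S j) else (S k, O)
  end.

Section Concatenation.
Variable len : nat -> nat.
Hypothesis len_pos : forall k, (1 <= len k)%nat.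

Lemma block_pos_lt i : (snd (block_pos len i) < len (fst (block_pos len i)))%nat.
Proof.
  induction i as [|i IH]; simpl; [apply len_pos|].
  destruct (block_pos len i) as [k j].
  destruct (Nat.ltb (S j) (len k)) eqn:E; simpl; [now apply Nat.ltb_lt | apply len_pos].
Qed.

Lemma block_pos_S i k j : block_pos len i = (k, j) ->
  (block_pos len (S i) = (k, S j) /\ (S j < len k)%nat) \/
  (block_pos len (S i) = (S k, O) /\ S j = len k).
Proof.
  intros E. pose proof (block_pos_lt i) as L. rewrite E in L. simpl in L.
  simpl. rewrite E. destruct (Nat.ltb (S j) (len k)) eqn:E2.
  - left. split; [reflexivity | now apply Nat.ltb_lt].
  - right. apply Nat.ltb_ge in E2. split; [reflexivity | lia].
Qed.

Lemma block_pos_fst_mono i i' : (i <= i')%nat ->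
  (fst (block_pos len i) <= fst (block_pos len i'))%nat.
Proof.
  induction 1 as [|i' _ IH]; [lia|].
  destruct (block_pos len i') as [k j] eqn:E.
  destruct (block_pos_S i' k j E) as [[Hs _]|[Hs _]]; rewrite Hs; simpl in *; lia.
Qed.

Lemma block_pos_fst_le i : (fst (block_pos len i) <= i)%nat.
Proof.
  induction i as [|i IH]; [simpl; lia|].
  destruct (block_pos len i) as [k j] eqn:E.
  destruct (block_pos_S i k j E) as [[H _]|[H _]]; rewrite H; simpl in *; lia.
Qed.

Lemma block_pos_within i k : block_pos len i = (k, O) ->
  forall j, (j < len k)%nat -> block_pos len (i + j) = (k, j).
Proof.
  intros E j. induction j as [|j IH]; intros Hj; [now rewrite Nat.add_0_r|].
  rewrite Nat.add_succ_r.
  destruct (block_pos_S (i + j) k j (IH ltac:(lia))) as [[H _]|[_ H]]; [exact H | lia].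
Qed.

Lemma block_pos_start k : exists i, block_pos len i = (k, O).
Proof.
  induction k as [|k [i Hi]]; [now exists O|].
  exists (i + len k)%nat. pose proof (len_pos k) as Hk.
  replace (i + len k)%nat with (S (i + (len k - 1)))%nat by lia.
  destruct (block_pos_S _ _ _ (block_pos_within i k Hi (len k - 1) ltac:(lia)))
    as [[_ Hs]|[Hs _]]; [lia | exact Hs].
Qed.

(* Block [k] is [c k 0, ..., c k (len k - 1)]; its endpoint [c k (len k)] must be the
   first point of block [k + 1]. *)
Lemma concat_blocks {A : Type} (c : nat -> nat -> A) :
  (forall k, c k (len k) = c (S k) O) ->
  exists b : nat -> A,
    (forall K, exists I, forall i, (I <= i)%nat -> exists k j,
        (K <= k)%nat /\ (j < len k)%nat /\ b i = c k j /\ b (S i) = c k (S j)) /\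
    (forall k j, (j < len k)%nat -> exists i, (k <= i)%nat /\ b i = c k j).
Proof.
  intros Hglue. exists (fun i => c (fst (block_pos len i)) (snd (block_pos len i))).
  split.
  - intros K. destruct (block_pos_start K) as [I HI]. exists I. intros i Hi.
    pose proof (block_pos_fst_mono I i Hi) as Hmono. rewrite HI in Hmono.
    pose proof (block_pos_lt i) as Hlt.
    destruct (block_pos len i) as [k j] eqn:E. simpl in Hmono, Hlt.
    exists k, j. split; [exact Hmono|]. split; [exact Hlt|]. split; [reflexivity|].
    destruct (block_pos_S i k j E) as [[H _]|[H Hj]]; rewrite H; simpl;
      [reflexivity | now rewrite <- Hglue, Hj].
  - intros k j Hj. destruct (block_pos_start k) as [i0 Hi0].
    exists (i0 + j)%nat. pose proof (block_pos_fst_le i0) as Hle. rewrite Hi0 in Hle.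
    rewrite (block_pos_within i0 k Hi0 j Hj). simpl in *. split; [lia | reflexivity].
Qed.

End Concatenation.

Section Metric.
Variables (X : Type) (d : X -> X -> R).
Hypothesis d_metric : is_metric d.

Lemma dist_nonneg x y : 0 <= d x y.
Proof. apply d_metric. Qed.

Lemma dist_refl x : d x x = 0.
Proof. now apply d_metric. Qed.

Lemma dist_eq x y : d x y = 0 -> x = y.
Proof. apply d_metric. Qed.

Lemma dist_sym x y : d x y = d y x.
Proof. apply d_metric. Qed.

Lemma dist_tri x y z : d x z <= d x y + d y z.
Proof. apply d_metric. Qed.

Lemma dist_pos x y : x <> y -> 0 < d x y.
Proof.
  intros Hxy. destruct (Rle_lt_or_eq_dec 0 (d x y) (dist_nonneg x y)) as [H|H]; [exact H|].
  exfalso. now apply Hxy, dist_eq.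
Qed.

Lemma dist_small_eq x y : (forall e, 0 < e -> d x y < e) -> x = y.
Proof.
  intros H. apply NNPP. intros Hxy. specialize (H _ (dist_pos x y Hxy)). lra.
Qed.

Definition is_closed (K : X -> Prop) : Prop :=
  forall c, (forall r, 0 < r -> exists a, K a /\ d c a < r) -> K c.

Lemma is_closed_compl_open K : is_closed K -> is_open d (fun z => ~ K z).
Proof.
  intros HK z Hz. apply NNPP. intros Hn. apply Hz, HK. intros r Hr.
  apply NNPP. intros Hn2. apply Hn. exists r. split; [exact Hr|].
  intros y Hy Ky. apply Hn2. exists y. auto.
Qed.

Lemma is_open_nbhd (F : X -> Prop) r : is_open d (fun z => exists a, F a /\ d a z < r).
Proof.
  intros z [a [Fa Hd]]. exists (r - d a z). split; [lra|].
  intros y Hy. exists a. split; [exact Fa|]. pose proof (dist_tri a z y). lra.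
Qed.

Lemma is_closed_diff_open (A O : X -> Prop) :
  is_closed A -> is_open d O -> is_closed (fun z => A z /\ ~ O z).
Proof.
  intros HA HO c H. split.
  - apply HA. intros r Hr. destruct (H r Hr) as [a [[Aa _] Hd]]. eauto.
  - intros Oc. destruct (HO c Oc) as [e [He Hq]]. destruct (H e He) as [a [[_ Na] Hd]].
    now apply Na, Hq.
Qed.

Lemma is_closed_rel_part (Q P1 P2 : X -> Prop) :
  is_closed Q -> rel_open d Q P2 ->
  (forall z, Q z -> P1 z \/ P2 z) -> (forall z, Q z -> P1 z -> P2 z -> False) ->
  is_closed (fun z => Q z /\ P1 z).
Proof.
  intros HQ HP2 Hcov Hdis c H.
  assert (Qc : Q c) by (apply HQ; intros r Hr; destruct (H r Hr) as [a [[Qa _] Hd]]; eauto).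
  split; [exact Qc|]. destruct (Hcov c Qc) as [P1c|P2c]; [exact P1c|].
  exfalso. destruct (HP2 c Qc P2c) as [e [He Hq]]. destruct (H e He) as [a [[Qa Pa] Hd]].
  apply (Hdis a Qa Pa). now apply Hq.
Qed.

(* An open set of X whose trace on A is B, when B is relatively open in A. *)
Definition open_extension (A B : X -> Prop) (z : X) : Prop :=
  exists a r, A a /\ B a /\ 0 < r /\
    (forall z', A z' -> d a z' < r -> B z') /\ d a z < r / 2.

Lemma open_extension_open A B : is_open d (open_extension A B).
Proof.
  intros z [a [r [Aa [Ba [Hr [H Hz]]]]]].
  exists (r / 2 - d a z). split; [lra|]. intros y Hy.
  exists a, r. repeat split; auto. pose proof (dist_tri a z y). lra.
Qed.

Lemma open_extension_trace A B z : A z -> open_extension A B z -> B z.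
Proof. intros Az [a [r [_ [_ [Hr [H Hz]]]]]]. apply H; [exact Az | lra]. Qed.

Lemma open_extension_incl A B z : rel_open d A B -> A z -> B z -> open_extension A B z.
Proof.
  intros HB Az Bz. destruct (HB z Az Bz) as [r [Hr H]].
  exists z, r. repeat split; auto. rewrite dist_refl. lra.
Qed.

Lemma rel_clopen_finite_inter (A : X -> Prop) (I : Type) (l : list I) (V : I -> X -> Prop) :
  (forall i, In i l -> rel_clopen d A (V i)) ->
  rel_clopen d A (fun z => A z /\ forall i, In i l -> V i z).
Proof.
  intros HV. split; [|split].
  - now intros z [Az _].
  - intros z Az [_ Hz].
    destruct (list_common_radius (fun i e => forall z', A z' -> d z z' < e -> V i z') l)
      as [e [He Hq]].
    + intros i e e' H _ Hle z' Az' Hd. apply H; [exact Az' | lra].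
    + intros i Hi. destruct (HV i Hi) as [_ [Ho _]]. now apply Ho, Hz.
    + exists e. split; [exact He|]. intros z' Az' Hd. split; [exact Az'|].
      intros i Hi. now apply Hq.
  - intros z Az Hz.
    assert (Hout : exists i, In i l /\ ~ V i z).
    { apply NNPP. intros Hn. apply Hz. split; [exact Az|]. intros i Hi.
      apply NNPP. intros Hv. apply Hn. eauto. }
    destruct Hout as [i [Hi Hv]]. destruct (HV i Hi) as [_ [_ Hc]].
    destruct (Hc z Az Hv) as [e [He Hq]]. exists e. split; [exact He|].
    intros z' Az' Hd [_ Hall]. exact (Hq z' Az' Hd (Hall i Hi)).
Qed.

Lemma rel_clopen_inter_open (A W U V : X -> Prop) :
  rel_clopen d A W -> is_open d U -> is_open d V ->
  (forall z, U z -> V z -> False) -> (forall z, W z -> U z \/ V z) ->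
  rel_clopen d A (fun z => W z /\ U z).
Proof.
  intros [Hs [Ho Hc]] HU HV Hdis Hcov. split; [|split].
  - intros z [Wz _]. now apply Hs.
  - intros z Az [Wz Uz]. destruct (Ho z Az Wz) as [e1 [He1 Hq1]].
    destruct (HU z Uz) as [e2 [He2 Hq2]].
    exists (Rmin e1 e2). split; [now apply Rmin_pos|]. intros z' Az' Hd.
    pose proof (Rmin_l e1 e2). pose proof (Rmin_r e1 e2).
    split; [apply Hq1 | apply Hq2]; auto; lra.
  - intros z Az Hz. destruct (classic (W z)) as [Wz|Wz].
    + assert (Vz : V z) by (destruct (Hcov z Wz); tauto).
      destruct (HV z Vz) as [e [He Hq]]. exists e. split; [exact He|].
      intros z' _ Hd [_ Uz']. exact (Hdis z' Uz' (Hq z' Hd)).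
    + destruct (Hc z Az Wz) as [e [He Hq]]. exists e. split; [exact He|].
      intros z' Az' Hd [Wz' _]. exact (Hq z' Az' Hd Wz').
Qed.

(* [mu]-chains; the step condition is imposed for all indices, so that a chain may be
   continued past its endpoint. *)
Definition chain (mu : R) (x z : X) : Prop :=
  exists (c : nat -> X) (m : nat),
    c O = x /\ c m = z /\ forall i, d (c i) (c (S i)) < mu.

Lemma chain_snoc mu x z z' : 0 < mu -> chain mu x z -> d z z' < mu -> chain mu x z'.
Proof.
  intros Hmu [c [m [H0 [Hm Hs]]]] Hz.
  exists (fun i => if Nat.leb i m then c i else z'), (S m).
  split; [exact H0|]. split.
  - destruct (Nat.leb (S m) m) eqn:E; [apply Nat.leb_le in E; lia | reflexivity].
  - intros i. destruct (Nat.leb i m) eqn:E1; destruct (Nat.leb (S i) m) eqn:E2.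
    + apply Hs.
    + apply Nat.leb_le in E1. apply Nat.leb_gt in E2.
      replace i with m by lia. now rewrite Hm.
    + apply Nat.leb_gt in E1. apply Nat.leb_le in E2. lia.
    + now rewrite dist_refl.
Qed.

Lemma connected_chain (C : X -> Prop) mu x y :
  0 < mu -> connected_set d C -> C x -> C y -> chain mu x y.
Proof.
  intros Hmu HC Cx Cy.
  destruct (HC (chain mu x) (fun z => ~ chain mu x z)) as [H|H].
  - intros z _ Hz. exists mu. split; [exact Hmu|]. intros z' _ Hz'. eapply chain_snoc; eauto.
  - intros z _ Hz. exists mu. split; [exact Hmu|]. intros z' _ Hz' Hc. apply Hz.
    eapply chain_snoc; [exact Hmu | exact Hc | now rewrite dist_sym].
  - intros z _. apply classic.
  - auto.
  - now apply H.
  - exfalso. apply (H x Cx). exists (fun _ => x), O.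
    repeat split. intros i. rewrite dist_refl. exact Hmu.
Qed.

(* Concatenation of chains alternately from x to y and from y to x, of mesh tending
   to 0. *)
Lemma connected_walk (C : X -> Prop) x y : connected_set d C -> C x -> C y -> x <> y ->
  exists b : nat -> X,
    (forall e, 0 < e -> exists I, forall i, (I <= i)%nat -> d (b i) (b (S i)) < e) /\
    (forall I, exists i, (I <= i)%nat /\ b i = x) /\
    (forall I, exists i, (I <= i)%nat /\ b i = y).
Proof.
  intros HC Cx Cy Hxy.
  set (a := fun k => if Nat.even k then x else y).
  assert (Ha : forall k, a k <> a (S k)).
  { intros k. unfold a. rewrite Nat.even_succ, <- Nat.negb_even.
    destruct (Nat.even k); simpl; congruence. }
  assert (Ca : forall k, C (a k)) by (intros k; unfold a; now destruct (Nat.even k)).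
  destruct (functional_choice (fun k (p : (nat -> X) * nat) =>
      fst p O = a k /\ fst p (snd p) = a (S k) /\
      forall i, d (fst p i) (fst p (S i)) < / INR (S k))) as [P HP].
  { intros k. destruct (connected_chain C (/ INR (S k)) (a k) (a (S k))) as [c [m Hc]];
      [apply inv_INR_S_pos | exact HC | apply Ca | apply Ca | now exists (c, m)]. }
  set (len := fun k => snd (P k)). set (c := fun k => fst (P k)).
  assert (Hlen : forall k, (1 <= len k)%nat).
  { intros k. destruct (HP k) as [H0 [Hm _]]. unfold len.
    destruct (snd (P k)) as [|m]; [|lia]. exfalso. apply (Ha k). now rewrite <- H0, <- Hm. }
  assert (Hstart : forall k, c k O = a k) by apply HP.
  destruct (concat_blocks len Hlen c) as [b [Hmesh Hvisit]].
  { intros k. rewrite Hstart. apply HP. }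
  exists b. split; [|split].
  - intros e He. destruct (archimed_inv_S e He) as [K HK]. destruct (Hmesh K) as [I HI].
    exists I. intros i Hi. destruct (HI i Hi) as [k [j [Hk [_ [Ei ESi]]]]].
    assert (Hstep : d (c k j) (c k (S j)) < / INR (S k)) by apply HP.
    pose proof (inv_INR_S_le K k Hk). rewrite Ei, ESi. lra.
  - intros I. destruct (Hvisit (2 * I)%nat O (Hlen _)) as [i [Hi Bi]].
    exists i. split; [lia|]. rewrite Bi, Hstart. unfold a. now rewrite Nat.even_even.
  - intros I. destruct (Hvisit (S (2 * I)) O (Hlen _)) as [i [Hi Bi]].
    exists i. split; [lia|]. rewrite Bi, Hstart. unfold a.
    now rewrite Nat.even_succ, <- Nat.negb_even, Nat.even_even.
Qed.

Lemma dim_zero_totally_disconnected (A : X -> Prop) :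
  dim_zero d A -> totally_disconnected d A.
Proof.
  intros HD C HCA HC x y Cx Cy. apply NNPP. intros Hxy.
  destruct (HD x (HCA x Cx) (d x y) (dist_pos x y Hxy)) as [W [[Hs [Ho Hc]] [Wx Hsm]]].
  destruct (HC W (fun z => ~ W z)) as [H|H].
  - intros z Cz Wz. destruct (Ho z (HCA z Cz) Wz) as [e [He Hq]].
    exists e. split; [exact He|]. intros z' Cz' Hd. apply Hq; [now apply HCA | exact Hd].
  - intros z Cz Wz. destruct (Hc z (HCA z Cz) Wz) as [e [He Hq]].
    exists e. split; [exact He|]. intros z' Cz' Hd. apply Hq; [now apply HCA | exact Hd].
  - intros z _. apply classic.
  - auto.
  - pose proof (Hsm y (H y Cy)). lra.
  - exact (H x Cx Wx).
Qed.


Section Compact.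
Hypothesis d_compact : compact_space d.

Lemma frequent_cluster_point (P : nat -> Prop) (s : nat -> X) :
  (forall N, exists n, (N <= n)%nat /\ P n) ->
  exists c, forall r, 0 < r -> forall N, exists n, (N <= n)%nat /\ P n /\ d c (s n) < r.
Proof.
  intros HP. apply NNPP. intros Hn.
  assert (H : forall c, exists r N, 0 < r /\
             forall n, (N <= n)%nat -> P n -> r <= d c (s n)).
  { intros c. apply NNPP. intros Hc. apply Hn. exists c. intros r Hr N.
    apply NNPP. intros Hx. apply Hc. exists r, N. split; [exact Hr|].
    intros n Hn1 Hn2. apply Rnot_lt_le. intros Hlt. apply Hx. eauto. }
  set (I := {p : X * R * nat | 0 < snd (fst p) /\
             forall n, (snd p <= n)%nat -> P n -> snd (fst p) <= d (fst (fst p)) (s n)}).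
  set (U := fun (i : I) z => d (fst (fst (proj1_sig i))) z < snd (fst (proj1_sig i))).
  destruct (d_compact I U) as [l Hl].
  - intros [[[c r] N] [Hr HN]] z Hz. unfold U in *; simpl in *.
    exists (r - d c z). split; [lra|]. intros y Hy. pose proof (dist_tri c z y). lra.
  - intros x. destruct (H x) as [r [N [Hr HN]]].
    exists (exist _ (x, r, N) (conj Hr HN)). unfold U; simpl. now rewrite dist_refl.
  - destruct (list_nat_bound (fun i : I => snd (proj1_sig i)) l) as [M HM].
    destruct (HP M) as [n [HnM Pn]]. destruct (Hl (s n)) as [i [Hi Ui]].
    specialize (HM _ Hi).
    destruct i as [[[c r] N] [Hr HN]]. unfold U in Ui; simpl in *.
    pose proof (HN n ltac:(lia) Pn). lra.
Qed.

Lemma seq_cluster_point (s : nat -> X) :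
  exists c, forall r, 0 < r -> forall N, exists n, (N <= n)%nat /\ d c (s n) < r.
Proof.
  destruct (frequent_cluster_point (fun _ => True) s) as [c Hc].
  - intros N. now exists N.
  - exists c. intros r Hr N. destruct (Hc r Hr N) as [n [H1 [_ H2]]]. eauto.
Qed.

Lemma finite_subcover_closed (K : X -> Prop) (I : Type) (G : I -> X -> Prop) :
  is_closed K -> (forall i, is_open d (G i)) -> (forall z, K z -> exists i, G i z) ->
  exists l : list I, forall z, K z -> exists i, In i l /\ G i z.
Proof.
  intros HK HG Hcov.
  set (U := fun (o : option I) z => match o with None => ~ K z | Some i => G i z end).
  destruct (d_compact (option I) U) as [l Hl].
  - intros [i|]; [apply HG | now apply is_closed_compl_open].
  - intros z. destruct (classic (K z)) as [Kz|Kz].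
    + destruct (Hcov z Kz) as [i Hi]. now exists (Some i).
    + now exists None.
  - exists (flat_map (fun o => match o with Some i => i :: nil | None => nil end) l).
    intros z Kz. destruct (Hl z) as [[i|] [Hi Ui]]; [|contradiction].
    exists i. split; [|exact Ui].
    apply in_flat_map. exists (Some i). split; [exact Hi | now left].
Qed.

Lemma closed_disjoint_dist_pos (F1 F2 : X -> Prop) :
  is_closed F1 -> is_closed F2 -> (forall z, F1 z -> F2 z -> False) ->
  exists r, 0 < r /\ forall a b, F1 a -> F2 b -> r <= d a b.
Proof.
  intros H1 H2 Hdis. apply NNPP. intros Hn.
  assert (H : forall n : nat, exists p : X * X,
             F1 (fst p) /\ F2 (snd p) /\ d (fst p) (snd p) < / INR (S n)).
  { intros n. apply NNPP. intros Hn2. apply Hn. exists (/ INR (S n)).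
    split; [apply inv_INR_S_pos|]. intros a b Ha Hb. apply Rnot_lt_le. intros Hlt.
    apply Hn2. now exists (a, b). }
  destruct (functional_choice _ H) as [p Hp].
  destruct (seq_cluster_point (fun n => fst (p n))) as [c Hc].
  apply (Hdis c).
  - apply H1. intros r Hr. destruct (Hc r Hr O) as [n [_ Hd]].
    exists (fst (p n)). split; [apply Hp | exact Hd].
  - apply H2. intros r Hr. destruct (archimed_inv_S (r / 2)) as [N HN]; [lra|].
    destruct (Hc (r / 2) ltac:(lra) N) as [n [Hn1 Hd]]. exists (snd (p n)).
    destruct (Hp n) as [_ [F2n Hd2]]. split; [exact F2n|].
    pose proof (inv_INR_S_le N n Hn1). pose proof (dist_tri c (fst (p n)) (snd (p n))). lra.
Qed.

Lemma closed_disjoint_open_nbhds (F1 F2 : X -> Prop) :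
  is_closed F1 -> is_closed F2 -> (forall z, F1 z -> F2 z -> False) ->
  exists U V, is_open d U /\ is_open d V /\ (forall z, F1 z -> U z) /\
    (forall z, F2 z -> V z) /\ (forall z, U z -> V z -> False).
Proof.
  intros H1 H2 Hdis. destruct (closed_disjoint_dist_pos F1 F2 H1 H2 Hdis) as [r [Hr Hsep]].
  exists (fun z => exists a, F1 a /\ d a z < r / 2), (fun z => exists a, F2 a /\ d a z < r / 2).
  split; [apply is_open_nbhd|].
  split; [apply is_open_nbhd|].
  split; [intros z Fz; exists z; rewrite dist_refl; split; [exact Fz | lra]|].
  split; [intros z Fz; exists z; rewrite dist_refl; split; [exact Fz | lra]|].
  intros z [a [Fa Ha]] [b [Fb Hb]]. pose proof (Hsep a b Fa Fb).
  pose proof (dist_tri a z b). rewrite (dist_sym z b) in *. lra.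
Qed.

Lemma rel_clopen_avoid_closed (A K : X -> Prop) x :
  is_closed K -> (forall y, K y -> A y) ->
  (forall y, K y -> exists W, rel_clopen d A W /\ W x /\ ~ W y) ->
  A x -> exists W, rel_clopen d A W /\ W x /\ forall z, W z -> ~ K z.
Proof.
  intros HK HKA Hsep Ax.
  destruct (functional_choice
              (fun (y : {y | K y}) W => rel_clopen d A W /\ W x /\ ~ W (proj1_sig y)))
    as [W HW].
  { intros [y Ky]. exact (Hsep y Ky). }
  destruct (finite_subcover_closed K _ (fun y => open_extension A (fun z => ~ W y z)))
    as [l Hl]; [exact HK | intros y; apply open_extension_open|..].
  { intros z Kz. exists (exist _ z Kz). apply open_extension_incl.
    - apply HW.
    - now apply HKA.
    - apply HW. }
  exists (fun z => A z /\ forall y, In y l -> W y z). split; [|split].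
  - apply rel_clopen_finite_inter. intros y _. apply HW.
  - split; [exact Ax|]. intros y _. apply HW.
  - intros z [Az Hz] Kz. destruct (Hl z Kz) as [y [Hy Hext]].
    exact (open_extension_trace A _ z Az Hext (Hz y Hy)).
Qed.

Definition quasi_component (A : X -> Prop) (x z : X) : Prop :=
  A z /\ forall W, rel_clopen d A W -> W x -> W z.

Section QuasiComponent.
Variables (A : X -> Prop) (x : X).
Hypothesis A_closed : is_closed A.
Hypothesis Ax : A x.

Lemma quasi_component_closed : is_closed (quasi_component A x).
Proof.
  intros c H.
  assert (Ac : A c) by (apply A_closed; intros r Hr; destruct (H r Hr) as [a [[Aa _] Hd]]; eauto).
  split; [exact Ac|]. intros W HW Wx. apply NNPP. intros Wc.
  destruct HW as [Hs [Ho Hc]] eqn:EW. destruct (Hc c Ac Wc) as [e [He Hq]].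
  destruct (H e He) as [a [[Aa Ha] Hd]]. exact (Hq a Aa Hd (Ha W HW Wx)).
Qed.

(* Two disjoint relatively open pieces of the quasi-component are separated by disjoint
   open sets U, V; compactness then yields a clopen set around x inside U \/ V, and its
   trace on U is a clopen set containing x which must contain the whole quasi-component. *)
Lemma quasi_component_split (P1 P2 : X -> Prop) :
  rel_open d (quasi_component A x) P1 -> rel_open d (quasi_component A x) P2 ->
  (forall z, quasi_component A x z -> P1 z \/ P2 z) ->
  (forall z, quasi_component A x z -> P1 z -> P2 z -> False) ->
  P1 x -> forall z, quasi_component A x z -> P1 z.
Proof.
  intros H1 H2 Hcov Hdis P1x z0 Qz0. apply NNPP. intros Nz0.
  assert (P2z0 : P2 z0) by (destruct (Hcov z0 Qz0); tauto).
  assert (Qx : quasi_component A x x) by (split; auto).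
  destruct (closed_disjoint_open_nbhds (fun z => quasi_component A x z /\ P1 z)
              (fun z => quasi_component A x z /\ P2 z))
    as [U [V [HU [HV [HF1 [HF2 HUV]]]]]].
  - apply is_closed_rel_part with P2; auto using quasi_component_closed.
  - apply is_closed_rel_part with P1; auto using quasi_component_closed.
    + intros z Qz. destruct (Hcov z Qz); auto.
    + intros z Qz A1 A2. exact (Hdis z Qz A2 A1).
  - intros z [Qz A1] [_ A2]. exact (Hdis z Qz A1 A2).
  - destruct (rel_clopen_avoid_closed A (fun z => (A z /\ ~ U z) /\ ~ V z) x)
      as [W0 [HW0 [W0x HW0K]]].
    + repeat apply is_closed_diff_open; auto.
    + now intros y [[Ay _] _].
    + intros y [[Ay NU] NV]. apply NNPP. intros Hn.
      assert (Qy : quasi_component A x y).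
      { split; [exact Ay|]. intros W HW Wx. apply NNPP. intros Wy. apply Hn. eauto. }
      destruct (Hcov y Qy); [apply NU, HF1 | apply NV, HF2]; auto.
    + exact Ax.
    + assert (HWU : rel_clopen d A (fun z => W0 z /\ U z)).
      { apply rel_clopen_inter_open with V; auto.
        intros z Wz. destruct (classic (U z)); [now left|].
        destruct (classic (V z)); [now right|].
        exfalso. apply (HW0K z Wz). repeat split; auto. now apply HW0. }
      destruct Qz0 as [Az0 HQ]. destruct (HQ _ HWU) as [_ Uz0].
      * split; [exact W0x | now apply HF1].
      * exact (HUV z0 Uz0 (HF2 z0 (conj (conj Az0 HQ) P2z0))).
Qed.

Lemma quasi_component_connected : connected_set d (quasi_component A x).
Proof.
  intros P1 P2 H1 H2 Hcov Hdis.
  assert (Qx : quasi_component A x x) by (split; auto).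
  destruct (Hcov x Qx) as [P1x|P2x].
  - left. now apply (quasi_component_split P1 P2).
  - right. apply (quasi_component_split P2 P1); auto.
    + intros z Qz. destruct (Hcov z Qz); auto.
    + intros z Qz B1 B2. exact (Hdis z Qz B2 B1).
Qed.

End QuasiComponent.

Lemma totally_disconnected_dim_zero (A : X -> Prop) :
  is_closed A -> totally_disconnected d A -> dim_zero d A.
Proof.
  intros HA HTD x Ax e He.
  assert (Hpt : forall z, quasi_component A x z -> z = x).
  { intros z Qz. apply (HTD (quasi_component A x)).
    - now intros w [Aw _].
    - now apply quasi_component_connected.
    - exact Qz.
    - split; auto. }
  destruct (rel_clopen_avoid_closed A (fun y => A y /\ e <= d x y) x) as [W [HW [Wx Hav]]].
  - intros c H.
    assert (Ac : A c) by (apply HA; intros r Hr; destruct (H r Hr) as [a [[Aa _] Hd]]; eauto).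
    split; [exact Ac|]. apply Rnot_lt_le. intros Hlt.
    destruct (H (e - d x c)) as [a [[_ Ha] Hd]]; [lra|].
    pose proof (dist_tri x c a). lra.
  - now intros y [Ay _].
  - intros y [Ay Hy]. apply NNPP. intros Hn.
    assert (Qy : quasi_component A x y).
    { split; [exact Ay|]. intros W HW Wx. apply NNPP. intros Wy. apply Hn. eauto. }
    apply Hpt in Qy. subst y. rewrite dist_refl in Hy. lra.
  - exact Ax.
  - exists W. split; [exact HW|]. split; [exact Wx|].
    intros z Wz. apply Rnot_le_lt. intros Hle. apply (Hav z Wz).
    split; [now apply HW | exact Hle].
Qed.

Lemma locally_related_uniformly (A : X -> Prop) (E : X -> X -> Prop) :
  is_closed A -> Equivalence E ->
  (forall c, A c -> exists r, 0 < r /\ forall z, A z -> d c z < r -> E c z) ->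
  exists lam, 0 < lam /\ forall a b, A a -> A b -> d a b < lam -> E a b.
Proof.
  intros HA HE Eloc. apply NNPP. intros Hn.
  assert (H : forall n : nat, exists p : X * X, A (fst p) /\ A (snd p) /\
             d (fst p) (snd p) < / INR (S n) /\ ~ E (fst p) (snd p)).
  { intros n. apply NNPP. intros Hn2. apply Hn. exists (/ INR (S n)).
    split; [apply inv_INR_S_pos|]. intros a b Aa Ab Hd. apply NNPP. intros Hs.
    apply Hn2. now exists (a, b). }
  destruct (functional_choice _ H) as [p Hp].
  destruct (seq_cluster_point (fun n => fst (p n))) as [c Hc].
  assert (Ac : A c).
  { apply HA. intros r Hr. destruct (Hc r Hr O) as [n [_ Hd]].
    exists (fst (p n)). split; [apply Hp | exact Hd]. }
  destruct (Eloc c Ac) as [r [Hr Hq]].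
  destruct (archimed_inv_S (r / 2)) as [N HN]; [lra|].
  destruct (Hc (r / 2) ltac:(lra) N) as [n [Hn1 Hd]].
  destruct (Hp n) as [Aa [Ab [Hab NE]]]. pose proof (inv_INR_S_le N n Hn1).
  pose proof (dist_tri c (fst (p n)) (snd (p n))).
  apply NE. transitivity c; [symmetry|]; apply Hq; auto; lra.
Qed.

Lemma dim_zero_clopen_partition (A : X -> Prop) :
  is_closed A -> dim_zero d A -> forall e, 0 < e -> exists E : X -> X -> Prop,
    Equivalence E /\
    (forall a b, A a -> A b -> E a b -> d a b < e) /\
    exists lam, 0 < lam /\ forall a b, A a -> A b -> d a b < lam -> E a b.
Proof.
  intros HA HD e He.
  destruct (functional_choice (fun (x : {x | A x}) W =>
      rel_clopen d A W /\ W (proj1_sig x) /\ forall z, W z -> d (proj1_sig x) z < e / 2))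
    as [W HW].
  { intros [x Ax]. apply (HD x Ax (e / 2)). lra. }
  destruct (finite_subcover_closed A _ (fun x => open_extension A (W x))) as [l Hl];
    [exact HA | intros x; apply open_extension_open|..].
  { intros z Az. exists (exist _ z Az).
    apply open_extension_incl; [apply HW | exact Az | apply HW]. }
  set (E := fun a b => forall x, In x l -> (W x a <-> W x b)).
  assert (HE : Equivalence E).
  { split.
    - intros a x _. tauto.
    - intros a b H x Hx. specialize (H x Hx). tauto.
    - intros a b c H1 H2 x Hx. specialize (H1 x Hx). specialize (H2 x Hx). tauto. }
  exists E. split; [exact HE|]. split.
  - intros a b Aa Ab Eab. destruct (Hl a Aa) as [x [Hx Hext]].
    pose proof (open_extension_trace A _ a Aa Hext) as Wa.
    destruct (HW x) as [_ [_ Hdiam]].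
    pose proof (Hdiam a Wa). pose proof (Hdiam b (proj1 (Eab x Hx) Wa)).
    pose proof (dist_tri a (proj1_sig x) b). rewrite (dist_sym a (proj1_sig x)) in *. lra.
  - apply locally_related_uniformly; auto. intros c Ac.
    destruct (list_common_radius
                (fun x r => forall z, A z -> d c z < r -> (W x c <-> W x z)) l) as [r [Hr Hq]].
    + intros x r r' H _ Hle z Az Hd. apply H; [exact Az | lra].
    + intros x _. destruct (HW x) as [[_ [Ho Hc]] _]. destruct (classic (W x c)) as [Wc|Wc].
      * destruct (Ho c Ac Wc) as [r [Hr Hq]]. exists r. split; [exact Hr|].
        intros z Az Hd. pose proof (Hq z Az Hd). tauto.
      * destruct (Hc c Ac Wc) as [r [Hr Hq]]. exists r. split; [exact Hr|].
        intros z Az Hd. pose proof (Hq z Az Hd). tauto.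
    + exists r. split; [exact Hr|]. intros z Az Hd x Hx. now apply Hq.
Qed.

Section Dynamics.
Variable f : X -> X.
Hypothesis f_equicont : equicontinuous d f.

Local Notation iter n x := (Nat.iter n f x).
Local Notation Omega := (nonwandering d f).

Lemma iter_add n m x : iter n (iter m x) = iter (n + m) x.
Proof. now rewrite Nat.iter_add. Qed.

Lemma iter_succ_r n x : iter n (f x) = iter (S n) x.
Proof. now rewrite Nat.iter_succ_r. Qed.

Lemma iter_period_mul n x : iter n x = x -> forall k, iter (k * n) x = x.
Proof.
  intros H k. induction k as [|k IH]; [reflexivity|].
  simpl. now rewrite Nat.iter_add, IH.
Qed.

Lemma equicont_le e : 0 < e -> exists dl, 0 < dl /\ dl <= e /\
  forall x y, d x y <= dl -> forall n, d (iter n x) (iter n y) <= e.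
Proof.
  intros He. destruct (f_equicont e He) as [dl [Hdl H]].
  exists (Rmin dl e). split; [now apply Rmin_pos|]. split; [apply Rmin_r|].
  intros x y Hxy n. apply H. pose proof (Rmin_l dl e). lra.
Qed.

Lemma nonwandering_recurrent x : Omega x ->
  forall e, 0 < e -> exists n, (0 < n)%nat /\ d x (iter n x) < e.
Proof.
  intros Hx e He. destruct (equicont_le (e / 2)) as [dl [Hdl [Hdle H]]]; [lra|].
  destruct (Hx dl Hdl) as [n [y [Hn [H1 H2]]]].
  exists n. split; [exact Hn|].
  pose proof (H x y ltac:(lra) n). pose proof (dist_tri x (iter n y) (iter n x)).
  rewrite (dist_sym (iter n y)) in *. lra.
Qed.

Lemma recurrent_nonwandering x :
  (forall e, 0 < e -> exists n, (0 < n)%nat /\ d x (iter n x) < e) -> Omega x.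
Proof.
  intros H e He. destruct (H e He) as [n [Hn Hd]].
  exists n, x. rewrite dist_refl. auto.
Qed.

Lemma nonwandering_closed : is_closed Omega.
Proof.
  intros c H e He. destruct (H (e / 2)) as [a [Ha Hca]]; [lra|].
  destruct (Ha (e / 2)) as [n [y [Hn [H1 H2]]]]; [lra|].
  exists n, y. split; [exact Hn|].
  pose proof (dist_tri c a y). pose proof (dist_tri c a (iter n y)). lra.
Qed.

Lemma nonwandering_invariant x : Omega x -> Omega (f x).
Proof.
  intros Hx. apply recurrent_nonwandering. intros e He.
  destruct (equicont_le (e / 2)) as [dl [Hdl [Hdle H]]]; [lra|].
  destruct (nonwandering_recurrent x Hx dl Hdl) as [n [Hn Hd]].
  exists n. split; [exact Hn|].
  pose proof (H x (iter n x) ltac:(lra) 1%nat) as H1. simpl in H1.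
  rewrite iter_succ_r. simpl. lra.
Qed.

Lemma nonwandering_iter n x : Omega x -> Omega (iter n x).
Proof. induction n; simpl; auto using nonwandering_invariant. Qed.

Lemma nonwandering_recurrent_unbounded x : Omega x ->
  forall e, 0 < e -> forall N, exists n, (N <= n)%nat /\ (0 < n)%nat /\ d x (iter n x) < e.
Proof.
  intros Hx. apply small_values_unbounded.
  - intros n. apply dist_nonneg.
  - now apply nonwandering_recurrent.
  - intros n k H. apply dist_eq in H. rewrite (iter_period_mul n x (eq_sym H)).
    apply dist_refl.
Qed.

(* Both returns are read off a common cluster point of the orbit of x and of the
   subsequence of the orbit of y at the times when the orbit of x is near that point. *)
Lemma nonwandering_jointly_recurrent x y : Omega x -> Omega y -> forall e, 0 < e ->
  exists p, (0 < p)%nat /\ d x (iter p x) < e /\ d y (iter p y) < e.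
Proof.
  intros Hx Hy e He. destruct (equicont_le (e / 4)) as [dl [Hdl [Hdle H]]]; [lra|].
  destruct (seq_cluster_point (fun n => iter n x)) as [c1 Hc1].
  destruct (frequent_cluster_point (fun n => d c1 (iter n x) < dl / 2) (fun n => iter n y))
    as [c2 Hc2].
  { intros N. destruct (Hc1 (dl / 2) ltac:(lra) N) as [n [H1 H2]]. eauto. }
  destruct (Hc2 (dl / 2) ltac:(lra) O) as [a [_ [Ha1 Ha2]]].
  destruct (Hc2 (dl / 2) ltac:(lra) (S a)) as [b [Hb [Hb1 Hb2]]].
  exists (b - a)%nat. split; [lia|].
  assert (Hreturn : forall z, Omega z -> d (iter a z) (iter b z) < dl ->
                             d z (iter (b - a) z) < e).
  { intros z Hz Hab. destruct (nonwandering_recurrent_unbounded z Hz dl Hdl a)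
      as [j [Hj1 [_ Hj2]]].
    assert (E1 : d (iter j z) (iter (b - a + j) z) <= e / 4).
    { replace (b - a + j)%nat with ((j - a) + b)%nat by lia.
      replace (iter j z) with (iter (j - a) (iter a z)) by (rewrite iter_add; f_equal; lia).
      rewrite <- iter_add. apply H. lra. }
    assert (E2 : d (iter (b - a) z) (iter (b - a + j) z) <= e / 4).
    { rewrite <- iter_add. apply H. lra. }
    pose proof (dist_tri z (iter j z) (iter (b - a) z)).
    pose proof (dist_tri (iter j z) (iter (b - a + j) z) (iter (b - a) z)).
    rewrite (dist_sym (iter (b - a + j) z) (iter (b - a) z)) in *. lra. }
  split; apply Hreturn; auto.
  - pose proof (dist_tri (iter a x) c1 (iter b x)). rewrite (dist_sym _ c1) in *. lra.
  - pose proof (dist_tri (iter a y) c2 (iter b y)). rewrite (dist_sym _ c2) in *. lra.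
Qed.

Lemma nonwandering_jointly_recurrent_unbounded x y : Omega x -> Omega y ->
  forall e, 0 < e -> forall N,
  exists n, (N <= n)%nat /\ d x (iter n x) < e /\ d y (iter n y) < e.
Proof.
  intros Hx Hy e He N.
  set (g := fun n => Rmax (d x (iter n x)) (d y (iter n y))).
  assert (Hgx : forall n, d x (iter n x) <= g n) by (intros n; apply Rmax_l).
  assert (Hgy : forall n, d y (iter n y) <= g n) by (intros n; apply Rmax_r).
  destruct (small_values_unbounded g) with (e := e) (N := N) as [n [H1 [_ H2]]].
  - intros n. pose proof (Hgx n). pose proof (dist_nonneg x (iter n x)). lra.
  - intros e' He'. destruct (nonwandering_jointly_recurrent x y Hx Hy e' He') as [p [Hp [A B]]].
    exists p. split; [exact Hp|]. now apply Rmax_lub_lt.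
  - intros n k H. pose proof (Hgx n). pose proof (Hgy n).
    pose proof (dist_nonneg x (iter n x)). pose proof (dist_nonneg y (iter n y)).
    assert (Ex : x = iter n x) by (apply dist_eq; lra).
    assert (Ey : y = iter n y) by (apply dist_eq; lra).
    unfold g. rewrite (iter_period_mul n x (eq_sym Ex)), (iter_period_mul n y (eq_sym Ey)).
    rewrite !dist_refl. now apply Rmax_left.
  - exact He.
  - exists n. split; [exact H1|]. pose proof (Hgx n). pose proof (Hgy n). split; lra.
Qed.

Lemma omega_limit_nonwandering c z :
  (forall r, 0 < r -> forall N, exists n, (N <= n)%nat /\ d c (iter n z) < r) -> Omega c.
Proof.
  intros H. apply recurrent_nonwandering. intros e He.
  destruct (equicont_le (e / 2)) as [dl [Hdl [Hdle Hq]]]; [lra|].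
  destruct (H dl Hdl O) as [n1 [_ H1]].
  destruct (H dl Hdl (S n1)) as [n2 [Hn2 H2]].
  exists (n2 - n1)%nat. split; [lia|].
  assert (E : iter n2 z = iter (n2 - n1) (iter n1 z)) by (rewrite iter_add; f_equal; lia).
  pose proof (Hq (iter n1 z) c ltac:(rewrite dist_sym; lra) (n2 - n1)%nat) as Hc.
  rewrite <- E in Hc. pose proof (dist_tri c (iter n2 z) (iter (n2 - n1) c)). lra.
Qed.

(* A preimage of x is a cluster point of the points just before the returns of x. *)
Lemma nonwandering_surjective x : Omega x -> exists c, Omega c /\ f c = x.
Proof.
  intros Hx.
  destruct (functional_choice (fun k n =>
      (k <= n)%nat /\ (0 < n)%nat /\ d x (iter n x) < / INR (S k))) as [t Ht].
  { intros k. apply nonwandering_recurrent_unbounded; [exact Hx | apply inv_INR_S_pos]. }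
  destruct (seq_cluster_point (fun k => iter (t k - 1) x)) as [c Hc].
  exists c. split.
  - apply (omega_limit_nonwandering c x). intros r Hr N.
    destruct (Hc r Hr (S N)) as [k [Hk Hd]].
    exists (t k - 1)%nat. split; [destruct (Ht k); lia | exact Hd].
  - apply dist_small_eq. intros e He.
    destruct (equicont_le (e / 2)) as [dl [Hdl [Hdle Hq]]]; [lra|].
    destruct (archimed_inv_S (e / 2)) as [N HN]; [lra|].
    destruct (Hc dl Hdl N) as [k [Hk Hd]].
    destruct (Ht k) as [H1 [H2 H3]].
    pose proof (Hq c (iter (t k - 1) x) ltac:(lra) 1%nat) as Hstep. simpl in Hstep.
    assert (E : f (iter (t k - 1) x) = iter (t k) x).
    { change (iter (S (t k - 1)) x = iter (t k) x). f_equal. lia. }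
    rewrite E in Hstep. pose proof (inv_INR_S_le N k Hk).
    pose proof (dist_tri (f c) (iter (t k) x) x). rewrite (dist_sym (iter (t k) x) x) in *. lra.
Qed.

Lemma nonwandering_iter_surjective n x : Omega x -> exists c, Omega c /\ iter n c = x.
Proof.
  revert x. induction n as [|n IH]; intros x Hx; [now exists x|].
  destruct (IH x Hx) as [c' [Hc' E]]. destruct (nonwandering_surjective c' Hc') as [c [Hc Ec]].
  exists c. split; [exact Hc|]. now rewrite <- iter_succ_r, Ec.
Qed.

Lemma nonwandering_attracts g : 0 < g ->
  exists N, forall x, exists p, Omega p /\ d (iter N x) p < g.
Proof.
  intros Hg. apply NNPP. intros Hn.
  assert (H : forall N, exists x, forall p, Omega p -> g <= d (iter N x) p).
  { intros N. apply NNPP. intros H1. apply Hn. exists N. intros x. apply NNPP. intros H2.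
    apply H1. exists x. intros p Hp. apply Rnot_lt_le. intros Hlt. apply H2. eauto. }
  destruct (functional_choice _ H) as [xs Hxs].
  destruct (seq_cluster_point xs) as [z Hz].
  destruct (equicont_le (g / 3)) as [dl [Hdl [Hdle Hq]]]; [lra|].
  destruct (frequent_cluster_point (fun n => d z (xs n) < dl) (fun n => iter n z)) as [c Hc].
  { intros N. destruct (Hz dl Hdl N) as [n [H1 H2]]. eauto. }
  assert (HcO : Omega c).
  { apply (omega_limit_nonwandering c z). intros r Hr N.
    destruct (Hc r Hr N) as [n [H1 [_ H2]]]. eauto. }
  destruct (Hc (g / 3) ltac:(lra) O) as [n [_ [H1 H2]]].
  pose proof (Hxs n c HcO). pose proof (Hq z (xs n) ltac:(lra) n).
  pose proof (dist_tri (iter n (xs n)) (iter n z) c).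
  rewrite (dist_sym (iter n (xs n)) (iter n z)), (dist_sym c) in *. lra.
Qed.

Lemma pseudo_orbit_drift eta : 0 < eta -> exists dl, 0 < dl /\
  forall z, pseudo_orbit d f dl z ->
  forall k i, d (z (k + i)%nat) (iter k (z i)) <= INR k * eta.
Proof.
  intros Heta. destruct (equicont_le eta Heta) as [dl [Hdl [_ Hq]]].
  exists dl. split; [exact Hdl|]. intros z Hz k. induction k as [|k IH]; intros i.
  - simpl. rewrite dist_refl. lra.
  - replace (S k + i)%nat with (k + S i)%nat by lia.
    pose proof (IH (S i)).
    pose proof (Hq (z (S i)) (f (z i)) ltac:(rewrite dist_sym; apply Hz) k) as Hk.
    rewrite iter_succ_r in Hk.
    pose proof (dist_tri (z (k + S i)%nat) (iter k (z (S i))) (iter (S k) (z i))).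
    rewrite S_INR. lra.
Qed.

(* An orbit passing near x and (later or earlier) near y forces x and y to be close:
   x and y return simultaneously, and equicontinuity carries both closeness relations
   to that common return time. *)
Lemma nonwandering_orbit_separation x y : Omega x -> Omega y -> forall z, 0 < z ->
  exists th, 0 < th /\ forall w t1 t2,
    d (iter t1 x) (iter t1 w) <= th -> d (iter t2 y) (iter t2 w) <= th -> d x y <= 4 * z.
Proof.
  intros Hx Hy z Hz. destruct (equicont_le z Hz) as [th [Hth [_ Hq]]].
  exists th. split; [exact Hth|]. intros w t1 t2 H1 H2.
  destruct (nonwandering_jointly_recurrent_unbounded x y Hx Hy z Hz (t1 + t2))
    as [n [Hn [A B]]].
  pose proof (Hq _ _ H1 (n - t1)%nat) as C1. pose proof (Hq _ _ H2 (n - t2)%nat) as C2.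
  rewrite !iter_add in C1, C2.
  replace (n - t1 + t1)%nat with n in C1 by lia.
  replace (n - t2 + t2)%nat with n in C2 by lia.
  pose proof (dist_tri x (iter n x) y). pose proof (dist_tri (iter n x) (iter n w) y).
  pose proof (dist_tri (iter n w) (iter n y) y).
  rewrite (dist_sym (iter n y) y), (dist_sym (iter n y) (iter n w)) in *. lra.
Qed.

Lemma shadowing_totally_disconnected : shadowing d f -> totally_disconnected d Omega.
Proof.
  intros Hsh C HCO HC x y Cx Cy. apply NNPP. intros Hxy.
  pose proof (dist_pos x y Hxy) as Hr.
  destruct (nonwandering_orbit_separation x y (HCO x Cx) (HCO y Cy) (d x y / 5))
    as [th [Hth Hsep]]; [lra|].
  destruct (Hsh th Hth) as [dl [Hdl Hsh']].
  destruct (equicont_le dl Hdl) as [mu [Hmu [_ Hq]]].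
  destruct (connected_chain C mu x y Hmu HC Cx Cy) as [c [m [H0 [Hm Hs]]]].
  destruct (Hsh' (fun i => iter i (c i))) as [w Hw].
  - intros i. change (d (iter (S i) (c i)) (iter (S i) (c (S i))) <= dl).
    apply Hq. left. apply Hs.
  - pose proof (Hw O) as Hw0. pose proof (Hw m) as Hwm. simpl in Hw0, Hwm.
    rewrite H0 in Hw0. rewrite Hm in Hwm.
    pose proof (Hsep w O m Hw0 Hwm). lra.
Qed.

Lemma limit_shadowing_totally_disconnected :
  limit_shadowing d f -> totally_disconnected d Omega.
Proof.
  intros Hls C HCO HC x y Cx Cy. apply NNPP. intros Hxy.
  pose proof (dist_pos x y Hxy) as Hr.
  destruct (connected_walk C x y HC Cx Cy Hxy) as [b [Hmesh [Hvx Hvy]]].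
  destruct (Hls (fun i => iter i (b i))) as [w Hw].
  - apply (proj2 (Un_cv_0_nonneg _
      (fun i => dist_nonneg (f (iter i (b i))) (iter (S i) (b (S i)))))).
    intros e He. destruct (equicont_le (e / 2)) as [dl [Hdl [_ Hq]]]; [lra|].
    destruct (Hmesh dl Hdl) as [I HI]. exists I. intros i Hi.
    change (d (iter (S i) (b i)) (iter (S i) (b (S i))) < e).
    pose proof (Hq (b i) (b (S i)) ltac:(pose proof (HI i Hi); lra) (S i)). lra.
  - destruct (nonwandering_orbit_separation x y (HCO x Cx) (HCO y Cy) (d x y / 5))
      as [th [Hth Hsep]]; [lra|].
    destruct (proj1 (Un_cv_0_nonneg _ (fun i => dist_nonneg (iter i (b i)) (iter i w))) Hw
                th Hth) as [I HI].
    destruct (Hvx I) as [t1 [Ht1 Bt1]]. destruct (Hvy I) as [t2 [Ht2 Bt2]].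
    pose proof (HI t1 Ht1) as H1. pose proof (HI t2 Ht2) as H2.
    rewrite Bt1 in H1. rewrite Bt2 in H2.
    pose proof (Hsep w t1 t2 ltac:(lra) ltac:(lra)). lra.
Qed.

Lemma dim_zero_invariant_partition : dim_zero d Omega -> forall e, 0 < e ->
  exists T : X -> X -> Prop, Equivalence T /\
    (forall a b, Omega a -> Omega b -> T a b -> d a b < e) /\
    (forall a b, T a b -> T (f a) (f b)) /\
    exists lam, 0 < lam /\ forall a b, Omega a -> Omega b -> d a b < lam -> T a b.
Proof.
  intros HD e He.
  destruct (dim_zero_clopen_partition Omega nonwandering_closed HD e He)
    as [E [HE [Esmall [lam [Hlam Elam]]]]].
  exists (fun a b => forall k, E (iter k a) (iter k b)). split; [split|].
  - intros a k. reflexivity.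
  - intros a b H k. now symmetry.
  - intros a b c H1 H2 k. now transitivity (iter k b).
  - split; [intros a b Oa Ob H; exact (Esmall a b Oa Ob (H O))|].
    split; [intros a b H k; rewrite !iter_succ_r; apply H|].
    destruct (equicont_le (lam / 2)) as [dl [Hdl [_ Hq]]]; [lra|].
    exists dl. split; [exact Hdl|]. intros a b Oa Ob Hd k.
    apply Elam; [now apply nonwandering_iter | now apply nonwandering_iter|].
    pose proof (Hq a b ltac:(lra) k). lra.
Qed.

Lemma invariant_relation_orbit (T : X -> X -> Prop) : Equivalence T ->
  (forall a b, T a b -> T (f a) (f b)) ->
  forall q : nat -> X, (forall k, T (q (S k)) (f (q k))) ->
  forall k, T (q k) (iter k (q O)).
Proof.
  intros HT Tf q Hq k. induction k as [|k IH]; [reflexivity|].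
  transitivity (f (q k)); [apply Hq | now apply Tf].
Qed.

Lemma pseudo_orbit_near_nonwandering g : 0 < g -> exists N dl, 0 < dl /\
  forall z, pseudo_orbit d f dl z ->
  (forall i, (i <= N)%nat -> d (z i) (iter i (z O)) < g) /\
  forall i, exists p, Omega p /\ d (iter N (z i)) p < g /\ d (z (N + i)%nat) p < 2 * g.
Proof.
  intros Hg. destruct (nonwandering_attracts g Hg) as [N HN].
  assert (HNp : 0 < INR N + 1) by (pose proof (pos_INR N); lra).
  set (eta := g / (INR N + 1)).
  assert (Heta : 0 < eta) by (unfold eta; apply Rdiv_lt_0_compat; lra).
  assert (HetaN : INR N * eta = g - eta) by (unfold eta; field; lra).
  destruct (pseudo_orbit_drift eta Heta) as [dl [Hdl Hdrift]].
  exists N, dl. split; [exact Hdl|]. intros z Hz. split.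
  - intros i Hi. pose proof (Hdrift z Hz i O) as Hd. rewrite Nat.add_0_r in Hd.
    assert (INR i * eta <= INR N * eta) by (apply Rmult_le_compat_r; [lra | now apply le_INR]).
    lra.
  - intros i. destruct (HN (z i)) as [p [Op Hp]]. exists p. split; [exact Op|].
    split; [exact Hp|]. pose proof (Hdrift z Hz N i).
    pose proof (dist_tri (z (N + i)%nat) (iter N (z i)) p). lra.
Qed.

(* The points of Omega near z (N + k) are successively related by an invariant
   equivalence with small classes, hence each is related to the k-th iterate of the
   first one, which is thus a point of Omega whose orbit follows z. *)
Lemma dim_zero_pseudo_orbit_tracking : dim_zero d Omega -> forall e, 0 < e ->
  exists N dl, 0 < dl /\ forall z, pseudo_orbit d f dl z ->
  (forall i, (i <= N)%nat -> d (z i) (iter i (z O)) <= e) /\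
  exists p, Omega p /\ forall k,
    d (z (k + N)%nat) (iter k p) <= e / 2 /\ d (iter (k + N) (z O)) (iter k p) <= e / 2.
Proof.
  intros HD e He.
  destruct (dim_zero_invariant_partition HD (e / 4) ltac:(lra))
    as [T [HT [Tsmall [Tf [lam [Hlam Tlam]]]]]].
  destruct (equicont_le (lam / 4)) as [u [Hu [Hule Hqu]]]; [lra|].
  destruct (equicont_le (e / 2)) as [v [Hv [_ Hqv]]]; [lra|].
  set (g := Rmin (Rmin (u / 2) v) (e / 8)).
  assert (Hg : 0 < g /\ g <= u / 2 /\ g <= v /\ g <= e / 8).
  { unfold g. pose proof (Rmin_l (Rmin (u / 2) v) (e / 8)).
    pose proof (Rmin_r (Rmin (u / 2) v) (e / 8)).
    pose proof (Rmin_l (u / 2) v). pose proof (Rmin_r (u / 2) v).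
    repeat split; try lra. repeat apply Rmin_pos; lra. }
  destruct Hg as [Hg0 [Hgu [Hgv Hge]]].
  destruct (pseudo_orbit_near_nonwandering g ltac:(lra)) as [N [dl0 [Hdl0 Hnear]]].
  exists N, (Rmin dl0 (lam / 4)). split; [apply Rmin_pos; lra|]. intros z Hz.
  assert (Hstep : forall i, d (f (z i)) (z (S i)) <= Rmin dl0 (lam / 4)) by apply Hz.
  assert (Hz0 : pseudo_orbit d f dl0 z)
    by (intros i; pose proof (Hstep i); pose proof (Rmin_l dl0 (lam / 4)); lra).
  destruct (Hnear z Hz0) as [Hinit Hp].
  split; [intros i Hi; pose proof (Hinit i Hi); lra|].
  destruct (functional_choice _ Hp) as [q Hq].
  assert (Hchain : forall k, T (q (S k)) (f (q k))).
  { intros k. destruct (Hq k) as [Ok [_ Hk]]. destruct (Hq (S k)) as [OSk [_ HSk]].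
    apply Tlam; [exact OSk | now apply nonwandering_invariant|].
    pose proof (Hstep (N + k)%nat). pose proof (Rmin_r dl0 (lam / 4)).
    replace (S (N + k)) with (N + S k)%nat in * by lia.
    pose proof (Hqu (z (N + k)%nat) (q k) ltac:(lra) 1%nat) as Hf. simpl in Hf.
    pose proof (dist_tri (q (S k)) (z (N + S k)%nat) (f (q k))).
    pose proof (dist_tri (z (N + S k)%nat) (f (z (N + k)%nat)) (f (q k))).
    rewrite (dist_sym (q (S k)) (z (N + S k)%nat)),
      (dist_sym (z (N + S k)%nat) (f (z (N + k)%nat))) in *. lra. }
  destruct (Hq O) as [Oq0 [Hq0 _]].
  exists (q O). split; [exact Oq0|]. intros k. split.
  - destruct (Hq k) as [Ok [_ Hk]].
    pose proof (Tsmall _ _ Ok (nonwandering_iter k _ Oq0)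
                  (invariant_relation_orbit T HT Tf q Hchain k)).
    rewrite Nat.add_comm. pose proof (dist_tri (z (N + k)%nat) (q k) (iter k (q O))). lra.
  - rewrite <- iter_add. apply Hqv. lra.
Qed.

Lemma dim_zero_shadowing : dim_zero d Omega -> shadowing d f.
Proof.
  intros HD e He. destruct (dim_zero_pseudo_orbit_tracking HD e He) as [N [dl [Hdl H]]].
  exists dl. split; [exact Hdl|]. intros z Hz.
  destruct (H z Hz) as [Hinit [p [_ Htrack]]]. exists (z O). intros i.
  destruct (Nat.le_gt_cases i N) as [Hi|Hi]; [now apply Hinit|].
  replace i with ((i - N) + N)%nat by lia. destruct (Htrack (i - N)%nat) as [H1 H2].
  pose proof (dist_tri (z (i - N + N)%nat) (iter (i - N) p) (iter (i - N + N) (z O))).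
  rewrite (dist_sym (iter (i - N) p)) in *. lra.
Qed.

Lemma dim_zero_asymptotic_tracking : dim_zero d Omega -> forall z : nat -> X,
  Un_cv (fun i => d (f (z i)) (z (S i))) 0 ->
  forall e, 0 < e -> exists y M, forall i, (M <= i)%nat -> d (z i) (iter i y) <= e.
Proof.
  intros HD z Hz e He.
  destruct (dim_zero_pseudo_orbit_tracking HD e He) as [N [dl [Hdl H]]].
  destruct (proj1 (Un_cv_0_nonneg _ (fun i => dist_nonneg (f (z i)) (z (S i)))) Hz dl Hdl)
    as [M HM].
  assert (Htail : pseudo_orbit d f dl (fun j => z (j + M)%nat)).
  { intros i. pose proof (HM (i + M)%nat ltac:(lia)). simpl. lra. }
  destruct (H _ Htail) as [_ [p [Op Htrack]]].
  destruct (nonwandering_iter_surjective (N + M) p Op) as [y [_ Ey]].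
  exists y, (N + M)%nat. intros i Hi.
  destruct (Htrack (i - (N + M))%nat) as [Hd _]. simpl in Hd.
  replace (i - (N + M) + N + M)%nat with i in Hd by lia.
  replace (iter i y) with (iter (i - (N + M)) p) by (rewrite <- Ey, iter_add; f_equal; lia).
  lra.
Qed.

(* Limits of the approximating orbits: equicontinuity passes the tracking estimates to a
   cluster point of their initial points. *)
Lemma dim_zero_limit_shadowing : dim_zero d Omega -> limit_shadowing d f.
Proof.
  intros HD z Hz.
  destruct (functional_choice (fun j (q : X * nat) => forall i, (snd q <= i)%nat ->
              d (z i) (iter i (fst q)) <= / INR (S j))) as [Q HQ].
  { intros j. destruct (dim_zero_asymptotic_tracking HD z Hz (/ INR (S j)) (inv_INR_S_pos j))
      as [y [M HyM]].
    now exists (y, M). }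
  destruct (seq_cluster_point (fun j => fst (Q j))) as [c Hc].
  exists c. apply (proj2 (Un_cv_0_nonneg _ (fun i => dist_nonneg (z i) (iter i c)))).
  intros e He.
  destruct (equicont_le (e / 2)) as [th [Hth [_ Hq]]]; [lra|].
  destruct (archimed_inv_S (e / 2)) as [j0 Hj0]; [lra|].
  destruct (Hc th Hth j0) as [j [Hj Hd]].
  exists (snd (Q j)). intros i Hi.
  pose proof (HQ j i Hi). pose proof (inv_INR_S_le j0 j Hj).
  pose proof (Hq c (fst (Q j)) ltac:(lra) i).
  pose proof (dist_tri (z i) (iter i (fst (Q j))) (iter i c)).
  rewrite (dist_sym (iter i (fst (Q j)))) in *. lra.
Qed.
End Dynamics.

End Compact.

End Metric.

Theorem theorem1p2 (X : Type) (d : X -> X -> R)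
  (Hmetric : is_metric d) (Hcompact : compact_space d)
  (f : X -> X) (Hequi : equicontinuous d f) :
  (limit_shadowing d f <-> shadowing d f) /\
  (shadowing d f <-> dim_zero d (nonwandering d f)) /\
  (dim_zero d (nonwandering d f) <-> totally_disconnected d (nonwandering d f)).
Proof.
  assert (Hdim : dim_zero d (nonwandering d f) <->
                 totally_disconnected d (nonwandering d f)).
  { split.
    - now apply dim_zero_totally_disconnected.
    - apply totally_disconnected_dim_zero; auto using nonwandering_closed. }
  assert (Hsh : shadowing d f -> dim_zero d (nonwandering d f))
    by (intros H; now apply Hdim, (shadowing_totally_disconnected X d Hmetric Hcompact f Hequi)).
  assert (Hls : limit_shadowing d f -> dim_zero d (nonwandering d f))
    by (intros H; now apply Hdim,
          (limit_shadowing_totally_disconnected X d Hmetric Hcompact f Hequi)).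
  split; [|split; [|exact Hdim]]; split; intros H.
  - now apply (dim_zero_shadowing X d Hmetric Hcompact f Hequi), Hls.
  - now apply (dim_zero_limit_shadowing X d Hmetric Hcompact f Hequi), Hsh.
  - now apply Hsh.
  - now apply (dim_zero_shadowing X d Hmetric Hcompact f Hequi).
Qed.
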